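(* Let $n$ be a positive integer. (i) The path $P_n$ of order $n$ belongs to $\mathcal U$ if and only if $n\in\{1,2,3,4,8\}$. (ii) The cycle $C_n$ (for $n\ge 3$) belongs to $\mathcal U$ if and only if $n\in\{3,4,5,6,7,8,10,14\}$.
   Context: All graphs are finite and simple. A set $P\subseteq V(G)$ is an open packing if no two distinct vertices of $P$ have a common neighbor; it is maximal if maximal under inclusion among open packings. $\rho^o(G)$ is the maximum size of an open packing and $\rho^o_L(G)$ the minimum size of a maximal open packing; $\mathcal U$ is the class of graphs with $\rho^o_L(G)=\rho^o(G)$. *)

From mathcomp Require Import all_boot.
Set Implicit Arguments. Unset Strict Implicit. Unset Printing Implicit Defensive.

(* A finite simple graph: vertex type T : finType, adjacency e : rel T,
   assumed symmetric and irreflexive where relevant. *)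

Definition open_nbhd (T : finType) (e : rel T) (v : T) : {set T} := [set u | e v u].

Definition open_packing (T : finType) (e : rel T) (P : {set T}) : bool :=
  [forall x in P, forall y in P,
     (x != y) ==> [disjoint open_nbhd e x & open_nbhd e y]].

Definition maximal_open_packing (T : finType) (e : rel T) (P : {set T}) : bool :=
  open_packing e P &&
  [forall Q : {set T}, (open_packing e Q && (P \subset Q)) ==> (Q == P)].

Definition rho_o (T : finType) (e : rel T) : nat :=
  \max_(P : {set T} | open_packing e P) #|P|.

(* rho^o_L(G): minimum size of a maximal open packing.
   Maximal open packings exist (extend set0); the bound #|T| is never
   attained strictly above the true minimum. *)
Definition rho_oL (T : finType) (e : rel T) : nat :=
  \big[minn/#|T|]_(P : {set T} | maximal_open_packing e P) #|P|.

Definition in_U (T : finType) (e : rel T) : Prop := rho_oL e = rho_o e.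

Definition path_rel (n : nat) : rel 'I_n :=
  fun i j => (i.+1 == j :> nat) || (j.+1 == i :> nat).

(* cycle C_n on vertices 0..n-1 (intended for n >= 3) *)
Definition cycle_rel (n : nat) : rel 'I_n :=
  fun i j => (i.+1 %% n == j :> nat) || (j.+1 %% n == i :> nat).
Arguments path_rel n : clear implicits.
Arguments cycle_rel n : clear implicits.

From mathcomp Require Import all_boot zify.
Set Implicit Arguments. Unset Strict Implicit. Unset Printing Implicit Defensive.

(* Two vertices conflict when they are distinct and share a neighbour, so an
   open packing is a conflict-free set and a maximal one is a conflict-free set
   that conflicts with every outside vertex ("dominating").  After
   characterising rho^o and rho^o_L this way, two general criteria give
   membership in U:
   - block_in_U: the vertices split into k conflict cliques, each containing an
     anchor whose conflicts stay in its block; then every open packing has at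
     most k vertices and every maximal one at least k;
   - packing_shift_bound / maximal_shift_bound: if the conflicts of every x are
     exactly g x and g^-1 x for an injection g, then on a g-invariant set C an
     open packing meets at most half of C and a maximal one at least a third.
   In P_n and C_n two vertices conflict iff they are at (cyclic) distance 2.
   Blocks handle P_n for n in {1,2,3,4,8}; the shift x |-> x+2 handles C_n for
   n in {3,...,8,10,14}.  For every other n we exhibit a small maximal open
   packing (period 6, two vertices out of six) and a larger open packing
   (period 4, two vertices out of four); C_9 needs its own small one. *)

Lemma bigmin_leq (I : eqType) (r : seq I) (p : pred I) (F : I -> nat) (d : nat) i :
  i \in r -> p i -> \big[minn/d]_(j <- r | p j) F j <= F i.
Proof.
elim: r => // x r IH; rewrite inE big_cons => /predU1P [<- -> | ir pi]; first exact: geq_minl.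
by case: ifP => _; [apply: leq_trans (geq_minr _ _) _|]; exact: IH.
Qed.

Section OpenPackings.
Variables (T : finType) (e : rel T).

Definition conflict (x y : T) : bool := (x != y) && [exists z, e x z && e y z].

Lemma conflictC x y : conflict x y = conflict y x.
Proof.
rewrite /conflict eq_sym; congr (_ && _).
by apply/existsP/existsP => -[z]; rewrite andbC; exists z.
Qed.

Lemma disjoint_nbhdE x y :
  [disjoint open_nbhd e x & open_nbhd e y] = ~~ [exists z, e x z && e y z].
Proof.
apply/pred0P/existsPn => H z; first by have := H z; rewrite /= !inE => ->.
by rewrite /= !inE; apply/negbTE; exact: H.
Qed.

Lemma open_packingP (P : {set T}) :
  reflect {in P &, forall x y, ~~ conflict x y} (open_packing e P).
Proof.
rewrite /conflict; apply: (iffP forall_inP) => [H x y xP yP | H x xP].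
  by move/forall_inP/(_ y yP): (H x xP); rewrite disjoint_nbhdE negb_and -implybE.
by apply/forall_inP => y yP; move: (H x y xP yP); rewrite disjoint_nbhdE negb_and -implybE.
Qed.

Definition dominating (P : {set T}) : Prop :=
  forall v, v \notin P -> exists2 p, p \in P & conflict p v.

Lemma maximal_open_packingP (P : {set T}) :
  open_packing e P -> reflect (dominating P) (maximal_open_packing e P).
Proof.
move=> packP; rewrite /maximal_open_packing packP; apply: (iffP forallP) => [maxP v vP | domP Q].
  have [/exists_inP [p pP c] | noconf] := boolP [exists p in P, conflict p v]; first by exists p.
  have /implyP := maxP (v |: P); rewrite subsetUr andbT.
  have -> : open_packing e (v |: P).
    apply/open_packingP => x y; rewrite !inE => /predU1P [-> | xP] /predU1P [-> | yP].
    - by rewrite /conflict eqxx.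
    - by rewrite conflictC; apply/negP => c; move/exists_inP: noconf; apply; exists y.
    - by apply/negP => c; move/exists_inP: noconf; apply; exists x.
    - exact: (open_packingP _ packP).
  by move=> /(_ isT) /eqP E; move: vP; rewrite -E setU11.
apply/implyP => /andP [/open_packingP packQ sPQ]; rewrite eqEsubset sPQ andbT.
apply/subsetP => v vQ; apply/negPn/negP => vP.
have [p pP c] := domP v vP.
by have := packQ p v (subsetP sPQ p pP) vQ; rewrite c.
Qed.

Lemma dominating_maximal (P : {set T}) :
  maximal_open_packing e P -> dominating P.
Proof. by move=> maxP; have /andP [packP _] := maxP; apply/(maximal_open_packingP packP). Qed.

Lemma leq_rho_o (Q : {set T}) : open_packing e Q -> #|Q| <= rho_o e.
Proof. exact: leq_bigmax_cond. Qed.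

Lemma rho_o_leq (K : nat) :
  (forall Q : {set T}, open_packing e Q -> #|Q| <= K) -> rho_o e <= K.
Proof. by move=> H; apply/bigmax_leqP. Qed.

Lemma rho_oL_leq (P : {set T}) : maximal_open_packing e P -> rho_oL e <= #|P|.
Proof. exact/bigmin_leq/mem_index_enum. Qed.

Lemma leq_rho_oL (K : nat) :
  (forall P : {set T}, maximal_open_packing e P -> K <= #|P|) -> K <= #|T| ->
  K <= rho_oL e.
Proof. by move=> H KT; rewrite /rho_oL; elim/big_ind: _ => // a b Ka Kb; rewrite leq_min Ka. Qed.

(* A maximum open packing is maximal, hence rho^o_L <= rho^o. *)
Lemma rho_oL_leq_rho_o : rho_oL e <= rho_o e.
Proof.
have packings_nonempty : 0 < #|(fun P : {set T} => open_packing e P)|.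
  by apply/card_gt0P; exists set0; apply/open_packingP => x y; rewrite inE.
have [Q packQ rhoE] := eq_bigmax_cond (fun P : {set T} => #|P|) packings_nonempty.
rewrite /rho_o rhoE.
apply/rho_oL_leq/andP; split => //; apply/forallP => R; apply/implyP => /andP [packR sQR].
by rewrite eq_sym eqEcard sQR -rhoE; exact: leq_rho_o.
Qed.

Lemma in_U_intro (K : nat) :
  (forall Q : {set T}, open_packing e Q -> #|Q| <= K) ->
  (forall P : {set T}, maximal_open_packing e P -> K <= #|P|) -> K <= #|T| ->
  in_U e.
Proof.
move=> packK maxK KT; apply/eqP; rewrite eqn_leq rho_oL_leq_rho_o.
exact: leq_trans (rho_o_leq packK) (leq_rho_oL maxK KT).
Qed.

Lemma not_in_U (P Q : {set T}) :
  maximal_open_packing e P -> open_packing e Q -> #|P| < #|Q| -> ~ in_U e.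
Proof.
move=> maxP packQ ltPQ eqU.
have := leq_ltn_trans (rho_oL_leq maxP) (leq_trans ltPQ (leq_rho_o packQ)).
by rewrite eqU ltnn.
Qed.

(* Block criterion: if f cuts T into k blocks that are conflict cliques, each
   with an anchor all of whose conflicts lie in its own block, then an open
   packing meets each block at most once and a maximal one at least once. *)
Lemma block_in_U (k : nat) (f : T -> 'I_k) :
  (forall x y, f x = f y -> x != y -> conflict x y) ->
  (forall j, exists2 a, f a = j & forall v, conflict a v -> f v = j) ->
  in_U e.
Proof.
move=> blockP anchorP.
have hits_all (A : {set T}) : [set: 'I_k] \subset f @: A -> k <= #|A|.
  by move/subset_leq_card; rewrite cardsT card_ord => /leq_trans; apply; exact: leq_imset_card.
apply: (in_U_intro (K := k)).
- move=> Q /open_packingP packQ; rewrite -(card_in_imset (f := f)).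
    by rewrite -[X in _ <= X]card_ord max_card.
  move=> x y xQ yQ fxy; apply/eqP/negPn/negP => xy.
  by have := packQ x y xQ yQ; rewrite blockP.
- move=> P maxP; apply/hits_all/subsetP => j _.
  have [a <- anchor_a] := anchorP j.
  have [aP | aP] := boolP (a \in P); first exact: imset_f.
  have [p pP c] := dominating_maximal maxP aP.
  by rewrite -(anchor_a p) ?imset_f // conflictC.
- rewrite -cardsT; apply/hits_all/subsetP => j _.
  by have [a <- _] := anchorP j; rewrite imset_f ?inE.
Qed.
End OpenPackings.

Section ShiftConflicts.
Variables (T : finType) (e : rel T) (g : T -> T).
Hypothesis g_inj : injective g.
Hypothesis conflict_shift : forall x, conflict e x (g x).
Hypothesis conflict_shiftP : forall x y, conflict e x y -> y = g x \/ x = g y.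
Variable C : {set T}.
Hypothesis C_shift_invariant : forall x, (g x \in C) = (x \in C).

(* g maps Q :&: C injectively into C :\: Q. *)
Lemma packing_shift_bound (Q : {set T}) :
  open_packing e Q -> 2 * #|Q :&: C| <= #|C|.
Proof.
move=> /open_packingP packQ.
have shift_out : g @: (Q :&: C) \subset C :\: Q.
  apply/subsetP => y /imsetP [x]; rewrite !inE => /andP [xQ xC] ->.
  rewrite C_shift_invariant xC andbT; apply/negP => gxQ.
  by have := packQ x (g x) xQ gxQ; rewrite conflict_shift.
have := subset_leq_card shift_out; rewrite card_in_imset; last by move=> x y _ _; exact: g_inj.
by rewrite -(cardsID Q C) setIC mul2n -addnn leq_add2l.
Qed.

(* C is covered by A, g @: A and g @^-1: A, where A := P :&: C. *)
Lemma maximal_shift_bound (P : {set T}) :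
  maximal_open_packing e P -> #|C| <= 3 * #|P :&: C|.
Proof.
move=> /dominating_maximal domP; set A := P :&: C.
have cover : C \subset A :|: g @: A :|: g @^-1: A.
  apply/subsetP => v vC; rewrite !inE vC andbT.
  have [//| vP] := boolP (v \in P).
  have [p pP /conflict_shiftP [vE | pE]] := domP v vP.
    by rewrite vE imset_f // inE pP -C_shift_invariant -vE.
  by rewrite -[g v]pE pP pE C_shift_invariant vC !orbT.
have := leq_imset_card g A; have := card_preimset A g_inj.
have := (leq_card_setU (A :|: g @: A) (g @^-1: A)).1.
have := (leq_card_setU A (g @: A)).1.
have := subset_leq_card cover; lia.
Qed.
End ShiftConflicts.

Lemma card_count n (p : pred nat) : #|[set i : 'I_n | p i]| = count p (iota 0 n).
Proof.
rewrite cardE /enum_mem size_filter -val_enum_ord count_map enumT.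
by apply: eq_count => i; rewrite /= inE.
Qed.

Lemma count_iotaS (p : pred nat) n : count p (iota 0 n.+1) = count p (iota 0 n) + p n.
Proof. by rewrite -addn1 iotaD count_cat /= addn0. Qed.

Lemma count_iota_split (p : pred nat) n m : m <= n ->
  count p (iota 0 n) = count p (iota 0 m) + count p (iota m (n - m)).
Proof. by move=> mn; rewrite -{1}(subnKC mn) iotaD count_cat add0n. Qed.

Lemma count_even k : count (fun i => i %% 2 == 0) (iota 0 k) = k.+1 %/ 2.
Proof. by elim: k => // k IH; rewrite count_iotaS IH /=; lia. Qed.

Lemma count_mod4_lt2 k :
  count (fun i => i %% 4 < 2) (iota 0 k) = 2 * (k %/ 4) + minn (k %% 4) 2.
Proof. by elim: k => // k IH; rewrite count_iotaS IH /=; lia. Qed.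

Lemma count_mod6_23 k : count (fun i => (i %% 6 == 2) || (i %% 6 == 3)) (iota 0 k) =
  2 * (k %/ 6) + minn (k %% 6 - 2) 2.
Proof. by elim: k => // k IH; rewrite count_iotaS IH /=; lia. Qed.

Lemma path_conflict n (x y : 'I_n) :
  conflict (path_rel n) x y = ((x : nat) + 2 == y) || ((y : nat) + 2 == x).
Proof.
apply/idP/idP => [/andP [xy /existsP [z]] | dist2].
  by move: xy; rewrite -val_eqE /= /path_rel; lia.
have [xn yn] := (ltn_ord x, ltn_ord y).
have mid_lt : minn x y + 1 < n by lia.
apply/andP; split; first by apply/negP => /eqP xy; move: dist2; rewrite xy; lia.
by apply/existsP; exists (Ordinal mid_lt); rewrite /path_rel /=; lia.
Qed.

(* Blocks {4q, 4q+2} and {4q+1, 4q+3} of the path, numbered 2q and 2q+1;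
   block j is anchored at the vertex j + 4 * (j %/ 2). *)
Definition path_block (x : nat) : nat := x %/ 4 * 2 + x %% 2.
Definition path_anchor (j : nat) : nat := j + 4 * (j %/ 2).

Lemma path_block_dist2 x y : path_block x = path_block y -> x <> y -> x + 2 = y \/ y + 2 = x.
Proof. rewrite /path_block; lia. Qed.

Lemma path_blocks_in_U n k :
  (forall x, x < n -> path_block x < k) ->
  (forall j, j < k -> path_anchor j < n) ->
  (forall j, j < k -> path_block (path_anchor j) = j) ->
  (forall j v, j < k -> v < n -> path_anchor j + 2 = v \/ v + 2 = path_anchor j ->
     path_block v = j) ->
  in_U (path_rel n).
Proof.
move=> block_lt anchor_lt anchor_block anchor_conf.
apply: (@block_in_U _ _ k (fun x : 'I_n => Ordinal (block_lt x (ltn_ord x)))).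
- move=> x y /(congr1 val) /= same xy; rewrite path_conflict.
  have xy_val : (x : nat) <> y by move=> /val_inj /eqP; apply/negP.
  by have [-> | ->] := path_block_dist2 same xy_val; rewrite eqxx ?orbT.
- move=> j; exists (Ordinal (anchor_lt j (ltn_ord j))); first exact/val_inj/anchor_block.
  move=> v; rewrite path_conflict => c; apply: val_inj => /=; apply: anchor_conf => //.
  by case/orP: c => /eqP c; [left | right].
Qed.

Lemma path_in_U n : n \in [:: 1; 2; 3; 4; 8] -> in_U (path_rel n).
Proof.
rewrite !inE => /orP [/eqP -> | /or4P [] /eqP ->];
  [ apply: (@path_blocks_in_U _ 1) | apply: (@path_blocks_in_U _ 2)
  | apply: (@path_blocks_in_U _ 2) | apply: (@path_blocks_in_U _ 2)
  | apply: (@path_blocks_in_U _ 4) ];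
  rewrite /path_block /path_anchor => *; lia.
Qed.

Definition cyclic_dist2 (n x y : nat) : bool :=
  [|| x + 2 == y, x + 2 == y + n, y + 2 == x | y + 2 == x + n].

Lemma modn_succ_small n x : x < n -> x.+1 %% n = if x.+1 == n then 0 else x.+1.
Proof. by move=> xn; case: eqP => [-> | ne]; [exact: modnn | rewrite modn_small //; lia]. Qed.

Lemma cycle_adj n (x y : 'I_n) :
  cycle_rel n x y = [|| (x : nat).+1 == y, (x : nat).+1 == y + n,
                        (y : nat).+1 == x | (y : nat).+1 == x + n].
Proof.
have [xn yn] := (ltn_ord x, ltn_ord y).
by rewrite /cycle_rel !modn_succ_small //; case: ifP; case: ifP; lia.
Qed.

Lemma cycle_conflict n (x y : 'I_n) : 3 <= n ->
  conflict (cycle_rel n) x y = ((x : nat) != y) && cyclic_dist2 n x y.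
Proof.
move=> n3; have [xn yn] := (ltn_ord x, ltn_ord y); have n0 : 0 < n by lia.
rewrite /conflict /cyclic_dist2 -val_eqE /=; case: (boolP ((x : nat) != y)) => //= xy.
apply/existsP/idP => [[z] | dist2]; first by rewrite !cycle_adj; have := ltn_ord z; move: xy; lia.
have [x_first | y_first] := boolP (((x : nat) + 2 == y) || ((x : nat) + 2 == y + n)).
- exists (Ordinal (ltn_pmod (x : nat).+1 n0)); rewrite !cycle_adj /= modn_succ_small //.
  by case: ifP; move: dist2 x_first xy; lia.
- exists (Ordinal (ltn_pmod (y : nat).+1 n0)); rewrite !cycle_adj /= modn_succ_small //.
  by case: ifP; move: dist2 y_first xy; lia.
Qed.

Definition cycle_shift n (x : 'I_n) : 'I_n :=
  Ordinal (ltn_pmod (x + 2) (leq_ltn_trans (leq0n x) (ltn_ord x))).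

Section CycleShift.
Variable n : nat.
Hypothesis n_ge3 : 3 <= n.

Lemma cycle_shiftE (x : 'I_n) :
  (cycle_shift x : nat) = if x + 2 < n then x + 2 else x + 2 - n.
Proof.
have xn := ltn_ord x; rewrite /=; case: ifP => small; first exact: modn_small.
by rewrite -[x + 2](@subnK n) ?modnDr ?modn_small; lia.
Qed.

Lemma cycle_shift_inj : injective (@cycle_shift n).
Proof.
move=> x y /(congr1 (@nat_of_ord n)); rewrite !cycle_shiftE => xy; apply: ord_inj.
by have := ltn_ord x; have := ltn_ord y; move: xy; case: ifP; case: ifP; lia.
Qed.

Lemma conflict_cycle_shift (x : 'I_n) : conflict (cycle_rel n) x (cycle_shift x).
Proof.
by rewrite cycle_conflict // /cyclic_dist2 cycle_shiftE; have := ltn_ord x; case: ifP; lia.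
Qed.

Lemma cycle_conflictP (x y : 'I_n) :
  conflict (cycle_rel n) x y -> y = cycle_shift x \/ x = cycle_shift y.
Proof.
have [xn yn] := (ltn_ord x, ltn_ord y).
rewrite cycle_conflict // /cyclic_dist2 => /andP [xy dist2].
have [x_first | y_first] := boolP (((x : nat) + 2 == y) || ((x : nat) + 2 == y + n)).
- by left; apply: ord_inj; rewrite cycle_shiftE; case: ifP; move: x_first; lia.
- by right; apply: ord_inj; rewrite cycle_shiftE; case: ifP; move: dist2 y_first xy; lia.
Qed.

Lemma cycle_shift_bounds (C : {set 'I_n}) :
  (forall x, (cycle_shift x \in C) = (x \in C)) ->
  (forall Q, open_packing (cycle_rel n) Q -> 2 * #|Q :&: C| <= #|C|) /\
  (forall P, maximal_open_packing (cycle_rel n) P -> #|C| <= 3 * #|P :&: C|).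
Proof.
move=> C_inv; split => [Q | P].
  exact: (packing_shift_bound cycle_shift_inj conflict_cycle_shift C_inv).
exact: (maximal_shift_bound cycle_shift_inj cycle_conflictP C_inv).
Qed.
End CycleShift.

(* Shift bounds on the whole vertex set: C_n is in U when floor(n/2) <= ceil(n/3). *)
Lemma cycle_in_U_thirds n : 3 <= n -> n %/ 2 <= (n + 2) %/ 3 -> in_U (cycle_rel n).
Proof.
move=> n3 halves_le_thirds.
have all_inv (x : 'I_n) : (cycle_shift x \in setT) = (x \in setT) by rewrite !inE.
have [packQ maxP] := cycle_shift_bounds n3 all_inv.
apply: (in_U_intro (K := n %/ 2)); rewrite ?card_ord; try lia.
- by move=> Q /packQ; rewrite setIT cardsT card_ord; lia.
- by move=> P /maxP; rewrite setIT cardsT card_ord; lia.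
Qed.

(* For even n = 2m, apply the shift bounds to the even and to the odd
   vertices separately (two cycles of length m). *)
Lemma cycle_in_U_even n : 3 <= n -> n %% 2 = 0 ->
  n %/ 2 %/ 2 <= (n %/ 2 + 2) %/ 3 -> in_U (cycle_rel n).
Proof.
move=> n3 n_even halves_le_thirds.
set Ev := [set x : 'I_n | x %% 2 == 0].
have Ev_inv x : (cycle_shift x \in Ev) = (x \in Ev).
  by rewrite !inE cycle_shiftE //; have := ltn_ord x; case: ifP; lia.
have Od_inv x : (cycle_shift x \in ~: Ev) = (x \in ~: Ev) by rewrite !in_setC Ev_inv.
have card_Ev : #|Ev| = n %/ 2.
  by rewrite /Ev (card_count n (fun x => x %% 2 == 0)) count_even; lia.
have card_Od : #|~: Ev| = n %/ 2 by rewrite cardsCs setCK card_ord card_Ev; lia.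
have [packEv maxEv] := cycle_shift_bounds n3 Ev_inv.
have [packOd maxOd] := cycle_shift_bounds n3 Od_inv.
apply: (in_U_intro (K := 2 * (n %/ 2 %/ 2))); rewrite ?card_ord; try lia.
- move=> Q packQ; have := packEv Q packQ; have := packOd Q packQ.
  by rewrite -(cardsID Ev Q) setDE card_Ev card_Od; lia.
- move=> P maxP; have := maxEv P maxP; have := maxOd P maxP.
  by rewrite -(cardsID Ev P) setDE card_Ev card_Od; lia.
Qed.

Lemma cycle_in_U n : n \in [:: 3; 4; 5; 6; 7; 8; 10; 14] -> in_U (cycle_rel n).
Proof.
rewrite !inE => /or4P [| | | /or4P [| | | /orP []]] /eqP ->;
  first [ by apply: cycle_in_U_thirds | by apply: cycle_in_U_even ].
Qed.

(* The small maximal open packing: residues 2 and 3 modulo 6, completed by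
   whichever of the last two vertices have residue 0 or 1. *)
Definition sparse_member (n i : nat) : bool :=
  (i %% 6 == 2) || (i %% 6 == 3) || ((n - 2 <= i) && (i %% 6 < 2)).
Definition sparse_packing n : {set 'I_n} := [set i : 'I_n | sparse_member n i].

(* It is maximal in any graph on 'I_n whose conflicts are pairs at cyclic
   distance 2 and contain all pairs at distance 2 -- both P_n and C_n. *)
Lemma sparse_packing_maximal n (e : rel 'I_n) : 5 <= n ->
  (forall x y : 'I_n, conflict e x y -> cyclic_dist2 n x y) ->
  (forall x y : 'I_n, (x : nat) + 2 = y -> conflict e x y) ->
  maximal_open_packing e (sparse_packing n).
Proof.
move=> n5 conflict_dist2 dist2_conflict.
have pack : open_packing e (sparse_packing n).
  apply/open_packingP => x y; rewrite !inE /sparse_member => xP yP.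
  apply/negP => /conflict_dist2; rewrite /cyclic_dist2.
  by have := ltn_ord x; have := ltn_ord y; move: xP yP; lia.
apply/(maximal_open_packingP pack) => v; rewrite inE /sparse_member => vP.
have vn := ltn_ord v; have [high | low] := leqP 4 (v %% 6).
- have pn : v - 2 < n by lia.
  exists (Ordinal pn); first by rewrite inE /sparse_member /=; lia.
  by apply: dist2_conflict => /=; lia.
- have pn : v + 2 < n by lia.
  exists (Ordinal pn); first by rewrite inE /sparse_member /=; lia.
  by rewrite conflictC; apply: dist2_conflict.
Qed.

Lemma card_sparse_packing n : 2 <= n ->
  #|sparse_packing n| <=
    2 * (n %/ 6) + minn (n %% 6 - 2) 2 + ((n - 2) %% 6 < 2) + ((n - 1) %% 6 < 2).
Proof.
move=> n2; rewrite /sparse_packing card_count.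
set periodic := fun i => (i %% 6 == 2) || (i %% 6 == 3).
set tail := fun i => (n - 2 <= i) && (i %% 6 < 2).
have -> : count (sparse_member n) (iota 0 n) = count (predU periodic tail) (iota 0 n) by [].
have := count_predUI periodic tail (iota 0 n).
rewrite count_mod6_23 (@count_iota_split tail n (n - 2)); last lia.
rewrite (@eq_in_count _ tail pred0) ?count_pred0; last by move=> i; rewrite mem_iota /tail /=; lia.
have -> : n - (n - 2) = 2 by lia.
rewrite /= /tail; have -> : (n - 2).+1 = n - 1 by lia.
lia.
Qed.

(* The large open packings: residues 0 and 1 modulo 4 (on the cycle, the last
   two vertices are dropped so as not to conflict across the wrap-around). *)
Definition dense_path_packing n : {set 'I_n} := [set i : 'I_n | i %% 4 < 2].
Definition dense_cycle_packing n : {set 'I_n} :=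
  [set i : 'I_n | (i %% 4 < 2) && (i + 2 < n)].

Lemma dense_path_packing_open n : open_packing (path_rel n) (dense_path_packing n).
Proof. by apply/open_packingP => x y; rewrite !inE path_conflict; lia. Qed.

Lemma dense_cycle_packing_open n :
  3 <= n -> open_packing (cycle_rel n) (dense_cycle_packing n).
Proof.
move=> n3; apply/open_packingP => x y; rewrite !inE cycle_conflict // /cyclic_dist2.
by have := ltn_ord x; have := ltn_ord y; lia.
Qed.

Lemma card_dense_path_packing n :
  #|dense_path_packing n| = 2 * (n %/ 4) + minn (n %% 4) 2.
Proof. by rewrite /dense_path_packing (card_count n (fun i => i %% 4 < 2)) count_mod4_lt2. Qed.

Lemma card_dense_cycle_packing n : 2 <= n ->
  #|dense_cycle_packing n| = 2 * ((n - 2) %/ 4) + minn ((n - 2) %% 4) 2.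
Proof.
move=> n2; rewrite /dense_cycle_packing (card_count n (fun i => (i %% 4 < 2) && (i + 2 < n))).
rewrite (@count_iota_split _ n (n - 2)); last lia.
rewrite (@eq_in_count _ _ pred0 (iota (n - 2) _)) ?count_pred0 ?addn0; last first.
  by move=> i; rewrite mem_iota /=; lia.
rewrite -count_mod4_lt2; apply: eq_in_count => i; rewrite mem_iota /=; lia.
Qed.

Lemma path_not_in_U n : 5 <= n -> n != 8 -> ~ in_U (path_rel n).
Proof.
move=> n5 n8.
have conflict_dist2 (x y : 'I_n) : conflict (path_rel n) x y -> cyclic_dist2 n x y.
  by rewrite path_conflict /cyclic_dist2; lia.
have dist2_conflict (x y : 'I_n) : (x : nat) + 2 = y -> conflict (path_rel n) x y.
  by rewrite path_conflict => ->; rewrite eqxx.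
apply: (not_in_U (sparse_packing_maximal n5 conflict_dist2 dist2_conflict)
                 (dense_path_packing_open n)).
by apply: leq_ltn_trans (card_sparse_packing _) _; rewrite ?card_dense_path_packing; lia.
Qed.

Lemma cycle_not_in_U n : 11 <= n -> n != 14 -> ~ in_U (cycle_rel n).
Proof.
move=> n11 n14; have [n3 n5] : 3 <= n /\ 5 <= n by lia.
have conflict_dist2 (x y : 'I_n) : conflict (cycle_rel n) x y -> cyclic_dist2 n x y.
  by rewrite cycle_conflict // => /andP [].
have dist2_conflict (x y : 'I_n) : (x : nat) + 2 = y -> conflict (cycle_rel n) x y.
  by rewrite cycle_conflict // /cyclic_dist2 => <-; lia.
apply: (not_in_U (sparse_packing_maximal n5 conflict_dist2 dist2_conflict)
                 (dense_cycle_packing_open n3)).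
by apply: leq_ltn_trans (card_sparse_packing _) _; rewrite ?card_dense_cycle_packing; lia.
Qed.

(* In C_9 the multiples of 3 form a maximal open packing of size 3, while the
   dense packing has size 4. *)
Lemma cycle9_not_in_U : ~ in_U (cycle_rel 9).
Proof.
set P := [set i : 'I_9 | i %% 3 == 0].
have maxP : maximal_open_packing (cycle_rel 9) P.
  have packP : open_packing (cycle_rel 9) P.
    apply/open_packingP => x y; rewrite !inE cycle_conflict // /cyclic_dist2.
    by have := ltn_ord x; have := ltn_ord y; lia.
  apply/(maximal_open_packingP packP) => v; rewrite inE => vP.
  exists (Ordinal (ltn_pmod (if v %% 3 == 1 then v + 2 else v + 7) (isT : 0 < 9))).
    by have := ltn_ord v; case: ifP => v_mod3; rewrite inE /=; lia.
  by have := ltn_ord v; case: ifP => v_mod3; rewrite cycle_conflict //= /cyclic_dist2; lia.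
apply: (not_in_U maxP (dense_cycle_packing_open (isT : 3 <= 9))).
by rewrite card_dense_cycle_packing // (card_count 9 (fun i => i %% 3 == 0)).
Qed.

Theorem proposition2 :
  (forall n : nat, 0 < n ->
     (in_U (path_rel n) <-> n \in ([:: 1; 2; 3; 4; 8] : seq nat))) /\
  (forall n : nat, 3 <= n ->
     (in_U (cycle_rel n) <-> n \in ([:: 3; 4; 5; 6; 7; 8; 10; 14] : seq nat))).
Proof.
split=> n n_pos; split; [| exact: path_in_U | | exact: cycle_in_U].
- move=> inU; apply/negPn/negP => n_out.
  by apply: (path_not_in_U _ _ inU); move: n_out; rewrite !inE; lia.
- move=> inU; apply/negPn/negP => n_out.
  have [n9 | n9] := eqVneq n 9; first by move: inU; rewrite n9; exact: cycle9_not_in_U.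
  by apply: (cycle_not_in_U _ _ inU); move: n_out n9; rewrite !inE; lia.
Qed.
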